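(* (Crossing lemma) Let $G=(U,V,E)$ be a path-restricted ordered bipartite graph. Let $U=U_1\cup U_2$ and $V=V_1\cup V_2$ be partitions such that every vertex of $U_1$ has higher order than every vertex of $U_2$ and every vertex of $V_1$ has higher order than every vertex of $V_2$. (1) If every vertex of $U_1$ has a neighbour in $V_1$, then the number of edges between $U_1$ and $V_2$ is at most $|U_1|+|V_2|$. (2) If every vertex of $V_1$ has a neighbour in $U_1$, then the number of edges between $V_1$ and $U_2$ is at most $|V_1|+|U_2|$.
   Context: An ordered bipartite graph is $G=(U,V,E)$ where $U,V$ are disjoint finite sets, each carrying a strict total order (both written $<$), and $E\subseteq U\times V$. A path is a sequence of edges in which consecutive edges share a vertex. A path visiting the vertices of $U$ in the order $u_1,\dots,u_k$ and those of $V$ in the order $v_1,\dots,v_l$ is a forward path if either $u_1<\dots<u_k$ and $v_1<\dots<v_l$, or $u_1>\dots>u_k$ and $v_1>\dots>v_l$. For $x\le y$ in $U$ write $\langle x,y\rangle=\{u\in U: x\le u\le y\}$, and similarly in $V$. If $u_a<u_b$ are the smallest and largest $U$-vertices and $v_c<v_d$ the smallest and largest $V$-vertices of a forward path $P$, the range of $P$ is $\{\langle u_a,u_b\rangle,\langle v_c,v_d\rangle\}$. A vertex of $P$ is non-terminal if it is adjacent along $P$ to two vertices of $P$. An edge is a back edge to $P$ if either it is $(u_a,v_j)$ with $v_j\in\langle v_c,v_d\rangle$ and $v_j>v'$ for some non-terminal vertex $v'\in V$ of $P$, or it is $(u_i,v_c)$ with $u_i\in\langle u_a,u_b\rangle$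 and $u_i>u'$ for some non-terminal vertex $u'\in U$ of $P$. $G$ is a path-restricted ordered bipartite graph (PRBG) if no forward path in $G$ has a back edge in $E$. (In the paper's drawings vertices are placed from right to left in increasing order, so $U_1,V_1$ lie to the left and $U_2,V_2$ to the right of a separating line.) *)

From mathcomp Require Import all_boot.
Set Warnings "-notation-overridden".
Set Implicit Arguments. Unset Strict Implicit. Unset Printing Implicit Defensive.

(* An ordered bipartite graph: U = 'I_m, V = 'I_n with their natural orders
   (every finite totally ordered set is order-isomorphic to an ordinal),
   E : {set 'I_m * 'I_n}. *)

Section OBG.
Variables (m n : nat).
Definition vtx := ('I_m + 'I_n)%type.

Definition adj (E : {set 'I_m * 'I_n}) (x y : vtx) : bool :=
  match x, y with
  | inl u, inr v => (u, v) \in E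
  | inr v, inl u => (u, v) \in E
  | _, _ => false
  end.

Definition is_gpath (E : {set 'I_m * 'I_n}) (p : seq vtx) : bool :=
  if p is x :: s then (s != [::]) && path (adj E) x s else false.

Definition uvs (p : seq vtx) : seq 'I_m :=
  pmap (fun x : vtx => if x is inl u then Some u else None) p.
Definition vvs (p : seq vtx) : seq 'I_n :=
  pmap (fun x : vtx => if x is inr v then Some v else None) p.

Definition forward_path (E : {set 'I_m * 'I_n}) (p : seq vtx) : bool :=
  is_gpath E p &&
  ((sorted (fun a b : 'I_m => a < b) (uvs p) && sorted (fun a b : 'I_n => a < b) (vvs p))
   || (sorted (fun a b : 'I_m => a > b) (uvs p) && sorted (fun a b : 'I_n => a > b) (vvs p))).

(* non-terminal vertices: those adjacent along p to two vertices of p,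
   i.e. x_1, ..., x_{L-1} *)
Definition nonterminal (p : seq vtx) : seq vtx := drop 1 (take (size p).-1 p).

Definition is_min_in {k} (s : seq 'I_k) (x : 'I_k) : Prop :=
  x \in s /\ forall y, y \in s -> x <= y.
Definition is_max_in {k} (s : seq 'I_k) (x : 'I_k) : Prop :=
  x \in s /\ forall y, y \in s -> y <= x.

Definition back_edge (p : seq vtx) (u : 'I_m) (v : 'I_n) : Prop :=
  (exists ua vc vd, is_min_in (uvs p) ua /\ is_min_in (vvs p) vc /\ is_max_in (vvs p) vd /\
     u = ua /\ (vc <= v <= vd) /\
     (exists v' : 'I_n, (inr v' : vtx) \in nonterminal p /\ v' < v))
  \/
  (exists ua ub vc, is_min_in (uvs p) ua /\ is_max_in (uvs p) ub /\ is_min_in (vvs p) vc /\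
     v = vc /\ (ua <= u <= ub) /\
     (exists u' : 'I_m, (inl u' : vtx) \in nonterminal p /\ u' < u)).

Definition PRBG (E : {set 'I_m * 'I_n}) : Prop :=
  forall p : seq vtx, forward_path E p ->
  forall u v, (u, v) \in E -> ~ back_edge p u v.
End OBG.

From mathcomp Require Import all_boot.

(* Charge a crossing edge (u, v) to u, unless u is the highest crossing
   neighbour of v, in which case charge it to v.  This charging is injective
   as soon as no u has two crossing edges (u, v1), (u, v2), v1 < v2, both
   leading to higher crossing neighbours u1 of v1 and u2 of v2.  In a PRBG
   this configuration cannot occur: u1 has a neighbour w above v2 on the other
   side of the partition, so u v1 u1 w is a forward path and (u, v2) is a back
   edge to it.  Part (2) is the mirror image with the roles of U and V
   exchanged. *)

Lemma card_pairs_le_add a b (S : {set 'I_a * 'I_b}) (X : {set 'I_a}) (Y : {set 'I_b}) :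
  S \subset setX X Y ->
  (forall x y1 y2 x1 x2, (x, y1) \in S -> (x, y2) \in S -> (x1, y1) \in S ->
     (x2, y2) \in S -> x < x1 -> x < x2 -> y1 = y2) ->
  #|S| <= #|X| + #|Y|.
Proof.
move=> /subsetP sSXY uniq_dominated.
pose charge (e : 'I_a * 'I_b) : ('I_a + 'I_b)%type :=
  if [exists x1, ((x1, e.2) \in S) && (e.1 < x1)] then inl e.1 else inr e.2.
have charge_inj : {in S &, injective charge}.
  move=> [x y] [x' y'] Sxy Sxy'; rewrite /charge /=.
  case: ifP => dom; case: ifP => dom' // [].
  - move=> eq_x; subst x'; move/existsP: dom => [x1 /andP[Sx1 lt1]].
    move/existsP: dom' => [x2 /andP[Sx2 lt2]].
    by rewrite (uniq_dominated _ _ _ _ _ Sxy Sxy' Sx1 Sx2 lt1 lt2).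
  - move=> eq_y; subst y'; move/negbT: dom; rewrite negb_exists => /forallP/(_ x').
    move/negbT: dom'; rewrite negb_exists => /forallP/(_ x).
    rewrite Sxy Sxy' /= -!leqNgt => le1 le2.
    by congr (_, _); apply/val_inj/eqP; rewrite eqn_leq le1 le2.
rewrite -(card_in_imset charge_inj).
have charge_sub : charge @: S \subset inl @: X :|: inr @: Y.
  apply/subsetP => _ /imsetP[e Se ->]; rewrite /charge.
  have /[!inE] /andP[eX eY] := sSXY e Se.
  by case: ifP => _; rewrite imset_f ?orbT.
apply: leq_trans (subset_leq_card charge_sub) _.
apply: leq_trans (leq_card_setU _ _).1 _.
by rewrite !card_imset //; [exact: inr_inj | exact: inl_inj].
Qed.

Lemma is_min_in_pair k (x y : 'I_k) : x <= y -> is_min_in [:: x; y] x.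
Proof.
by move=> le_xy; split=> [|z]; rewrite !inE ?eqxx // => /orP[] /eqP->.
Qed.

Lemma is_max_in_pair k (x y : 'I_k) : x <= y -> is_max_in [:: x; y] y.
Proof.
by move=> le_xy; split=> [|z]; rewrite !inE ?eqxx ?orbT // => /orP[] /eqP->.
Qed.

Section PathRestricted.
Variables (m n : nat) (E : {set 'I_m * 'I_n}).
Hypothesis prbgE : PRBG E.

Lemma PRBG_no_chord_from_U (x x1 : 'I_m) (y1 y2 w : 'I_n) :
  (x, y1) \in E -> (x1, y1) \in E -> (x1, w) \in E -> (x, y2) \in E ->
  x < x1 -> y1 < y2 -> y2 <= w -> False.
Proof.
move=> Exy1 Ex1y1 Ex1w Exy2 lt_x_x1 lt_y1_y2 le_y2_w.
have lt_y1_w := leq_trans lt_y1_y2 le_y2_w.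
have fwd : forward_path E [:: inl x; inr y1; inl x1; inr w].
  by rewrite /forward_path /is_gpath /= Exy1 Ex1y1 Ex1w lt_x_x1 lt_y1_w.
apply: (prbgE _ fwd _ _ Exy2); left; exists x, y1, w.
split; first exact/is_min_in_pair/ltnW.
split; first exact/is_min_in_pair/ltnW.
split; first exact/is_max_in_pair/ltnW.
split=> //; split; first by rewrite (ltnW lt_y1_y2) le_y2_w.
by exists y1; rewrite /nonterminal /= !inE eqxx.
Qed.

Lemma PRBG_no_chord_from_V (y y1 : 'I_n) (x1 x2 w : 'I_m) :
  (x1, y) \in E -> (x1, y1) \in E -> (w, y1) \in E -> (x2, y) \in E ->
  y < y1 -> x1 < x2 -> x2 <= w -> False.
Proof.
move=> Ex1y Ex1y1 Ewy1 Ex2y lt_y_y1 lt_x1_x2 le_x2_w.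
have lt_x1_w := leq_trans lt_x1_x2 le_x2_w.
have fwd : forward_path E [:: inr y; inl x1; inr y1; inl w].
  by rewrite /forward_path /is_gpath /= Ex1y Ex1y1 Ewy1 lt_y_y1 lt_x1_w.
apply: (prbgE _ fwd _ _ Ex2y); right; exists x1, w, y.
split; first exact/is_min_in_pair/ltnW.
split; first exact/is_max_in_pair/ltnW.
split; first exact/is_min_in_pair/ltnW.
split=> //; split; first by rewrite (ltnW lt_x1_x2) le_x2_w.
by exists x1; rewrite /nonterminal /= !inE eqxx.
Qed.

Lemma crossing_edges_U1_V2 (U1 : {set 'I_m}) (V1 V2 : {set 'I_n}) :
  (forall x y, x \in V1 -> y \in V2 -> y < x) ->
  (forall u, u \in U1 -> exists2 v, v \in V1 & (u, v) \in E) ->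
  #|[set e in E | (e.1 \in U1) && (e.2 \in V2)]| <= #|U1| + #|V2|.
Proof.
move=> V2_lt_V1 U1_to_V1; apply: card_pairs_le_add.
  by apply/subsetP => -[u v]; rewrite !inE => /andP[_ ->].
move=> x y1 y2 x1 x2; rewrite !inE /=.
move=> /and3P[Exy1 _ y1V2] /and3P[Exy2 _ y2V2] /and3P[Ex1y1 x1U1 _].
move=> /and3P[Ex2y2 x2U1 _] lt_x_x1 lt_x_x2.
have chord x' y y' : (x, y) \in E -> (x, y') \in E -> (x', y) \in E ->
    x' \in U1 -> y' \in V2 -> x < x' -> y < y' -> False.
  move=> Exy Exy' Ex'y x'U1 y'V2 lt_x_x' lt_y_y'.
  have [w wV1 Ex'w] := U1_to_V1 x' x'U1.
  apply: PRBG_no_chord_from_U Exy Ex'y Ex'w Exy' lt_x_x' lt_y_y' _.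
  exact/ltnW/V2_lt_V1.
case: (ltngtP y1 y2) => [lt12|lt21|/val_inj //]; exfalso.
- exact: chord Exy1 Exy2 Ex1y1 x1U1 y2V2 lt_x_x1 lt12.
- exact: chord Exy2 Exy1 Ex2y2 x2U1 y1V2 lt_x_x2 lt21.
Qed.

Lemma crossing_edges_V1_U2 (U1 U2 : {set 'I_m}) (V1 : {set 'I_n}) :
  (forall x y, x \in U1 -> y \in U2 -> y < x) ->
  (forall v, v \in V1 -> exists2 u, u \in U1 & (u, v) \in E) ->
  #|[set e in E | (e.2 \in V1) && (e.1 \in U2)]| <= #|V1| + #|U2|.
Proof.
move=> U2_lt_U1 V1_to_U1.
set S := [set e in E | _].
rewrite -(card_imset S (can_inj swap_pairK)).
rewrite (can2_imset_pre S swap_pairK swap_pairK).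
apply: card_pairs_le_add.
  by apply/subsetP => -[v u]; rewrite !inE /= => /andP[_ /andP[-> ->]].
move=> y x1 x2 y1 y2; rewrite !inE /=.
move=> /and3P[Ex1y _ x1U2] /and3P[Ex2y _ x2U2] /and3P[Ex1y1 y1V1 _].
move=> /and3P[Ex2y2 y2V1 _] lt_y_y1 lt_y_y2.
have chord y' x x' : (x, y) \in E -> (x', y) \in E -> (x, y') \in E ->
    y' \in V1 -> x' \in U2 -> y < y' -> x < x' -> False.
  move=> Exy Ex'y Exy' y'V1 x'U2 lt_y_y' lt_x_x'.
  have [w wU1 Ewy'] := V1_to_U1 y' y'V1.
  apply: PRBG_no_chord_from_V Exy Exy' Ewy' Ex'y lt_y_y' lt_x_x' _.
  exact/ltnW/U2_lt_U1.
case: (ltngtP x1 x2) => [lt12|lt21|/val_inj //]; exfalso.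
- exact: chord Ex1y Ex2y Ex1y1 y1V1 x2U2 lt_y_y1 lt12.
- exact: chord Ex2y Ex1y Ex2y2 y2V1 x1U2 lt_y_y2 lt21.
Qed.

End PathRestricted.

Theorem lemma7 (m n : nat) (E : {set 'I_m * 'I_n})
  (U1 U2 : {set 'I_m}) (V1 V2 : {set 'I_n}) :
  PRBG E ->
  U1 :|: U2 = setT -> U1 :&: U2 = set0 ->
  V1 :|: V2 = setT -> V1 :&: V2 = set0 ->
  (forall x y, x \in U1 -> y \in U2 -> y < x) ->
  (forall x y, x \in V1 -> y \in V2 -> y < x) ->
  ((forall u, u \in U1 -> exists2 v, v \in V1 & (u, v) \in E) ->
     #|[set e in E | (e.1 \in U1) && (e.2 \in V2)]| <= #|U1| + #|V2|)
  /\
  ((forall v, v \in V1 -> exists2 u, u \in U1 & (u, v) \in E) ->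
     #|[set e in E | (e.2 \in V1) && (e.1 \in U2)]| <= #|V1| + #|U2|).
Proof.
move=> prbgE _ _ _ _ U2_lt_U1 V2_lt_V1; split.
- exact: crossing_edges_U1_V2.
- exact: crossing_edges_V1_U2.
Qed.
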